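(* Let $\mathcal H$ be a separable complex Hilbert space, $A\in L(\mathcal H)^+$, $\mathcal S$ a closed subspace, $\mathcal N=\mathcal S\cap N(A)$, and $T\in L(\mathcal H)$ with $R(T)\subseteq\mathcal S$. Then $T$ is an $A$-projection into $\mathcal S$ if and only if $(A,\mathcal S)$ is compatible and $P_{\mathcal S\ominus\mathcal N}T=P_{A,\mathcal S\ominus\mathcal N}$.
   Context: $N(\cdot)$ is the nullspace, $\mathcal S\ominus\mathcal N=\mathcal S\cap\mathcal N^\perp$, $P_{\mathcal M}$ the orthogonal projection onto $\mathcal M$. $(A,\mathcal S)$ is compatible if there exists $Q\in L(\mathcal H)$ with $Q^2=Q$, $R(Q)=\mathcal S$, $AQ=Q^*A$. When $(A,\mathcal S)$ is compatible, $\mathcal H=(\mathcal S\ominus\mathcal N)\dotplus A(\mathcal S)^\perp$ and $P_{A,\mathcal S\ominus\mathcal N}$ denotes the (bounded) oblique projection with range $\mathcal S\ominus\mathcal N$ and nullspace $A(\mathcal S)^\perp$. With $\|z\|_A=\langle Az,z\rangle^{1/2}$, $T$ is an $A$-projection into $\mathcal S$ if $R(T)\subseteq\mathcal S$ and $\|y-Ty\|_A\le\|y-s\|_A$ for all $y\in\mathcal H$, $s\in\mathcal S$. *)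

From HB Require Import structures.
From mathcomp Require Import all_boot all_order all_algebra.
From mathcomp Require Import reals.
From mathcomp Require Export complex.
Set Implicit Arguments. Unset Strict Implicit. Unset Printing Implicit Defensive.
Import Order.TTheory GRing.Theory Num.Theory.
Local Open Scope ring_scope.

Section Hilbert.
Variables (R : realType) (V : lmodType R[i]) (ip : V -> V -> R[i]).

Definition is_inner_product : Prop :=
  [/\ forall (a : R[i]) x y z, ip (a *: x + y) z = a * ip x z + ip y z,
      forall x y, ip y x = (ip x y)^*,
      forall x, 0 <= ip x x &
      forall x, ip x x = 0 -> x = 0].

Definition hnorm (x : V) : R := Num.sqrt (complex.Re (ip x x)).

Definition converges (u : nat -> V) (l : V) : Prop :=
  forall e : R, 0 < e -> exists N, forall n, (N <= n)%N -> hnorm (u n - l) < e.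

Definition cauchy_seq (u : nat -> V) : Prop :=
  forall e : R, 0 < e -> exists N, forall n m, (N <= n)%N -> (N <= m)%N ->
    hnorm (u n - u m) < e.

Definition complete : Prop := forall u, cauchy_seq u -> exists l, converges u l.

Definition separable : Prop :=
  exists d : nat -> V, forall x (e : R), 0 < e -> exists n, hnorm (x - d n) < e.

Definition hilbert_space : Prop := is_inner_product /\ complete.

Definition bounded_op (f : V -> V) : Prop :=
  (forall (a : R[i]) x y, f (a *: x + y) = a *: f x + f y) /\
  exists M : R, forall x, hnorm (f x) <= M * hnorm x.

Definition positive_op (A : V -> V) : Prop :=
  bounded_op A /\ forall x, 0 <= ip (A x) x.

Definition closed_subspace (S : V -> Prop) : Prop :=
  [/\ S 0,
      forall (a : R[i]) x y, S x -> S y -> S (a *: x + y) &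
      forall u l, (forall n, S (u n)) -> converges u l -> S l].

Definition op_null (f : V -> V) : V -> Prop := fun x => f x = 0.
Definition op_range (f : V -> V) : V -> Prop := fun y => exists x, y = f x.
Definition op_image (f : V -> V) (S : V -> Prop) : V -> Prop :=
  fun y => exists x, S x /\ y = f x.
Definition orth (M : V -> Prop) : V -> Prop :=
  fun x => forall y, M y -> ip x y = 0.
Definition inter (M N : V -> Prop) : V -> Prop := fun x => M x /\ N x.
Definition ominus (S N : V -> Prop) : V -> Prop := inter S (orth N).

Definition is_adjoint (Q Qs : V -> V) : Prop :=
  forall x y, ip (Q x) y = ip x (Qs y).

Definition compatible (A : V -> V) (S : V -> Prop) : Prop :=
  exists Q Qs : V -> V,
    [/\ bounded_op Q, forall x, Q (Q x) = Q x, forall y, S y <-> op_range Q y,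
        bounded_op Qs /\ is_adjoint Q Qs & forall x, A (Q x) = Qs (A x)].

Definition orth_proj (M : V -> Prop) (P : V -> V) : Prop :=
  [/\ bounded_op P, forall x, M (P x) & forall x y, M y -> ip (x - P x) y = 0].

Definition oblique_proj (M K : V -> Prop) (Q : V -> V) : Prop :=
  [/\ bounded_op Q, forall x, Q (Q x) = Q x,
      forall y, M y <-> op_range Q y & forall x, K x <-> op_null Q x].

Definition Anorm (A : V -> V) (z : V) : R := Num.sqrt (complex.Re (ip (A z) z)).

Definition A_projection (A : V -> V) (S : V -> Prop) (T : V -> V) : Prop :=
  (forall x, S (T x)) /\
  forall y s, S s -> Anorm A (y - T y) <= Anorm A (y - s).

End Hilbert.

From HB Require Import structures.
From mathcomp Require Import all_boot all_order all_algebra.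
From mathcomp Require Import reals complex.
From mathcomp Require Import ring lra.
From mathcomp Require boolp classical_sets.
Import Order.TTheory GRing.Theory Num.Theory.
Local Open Scope ring_scope.
Set Implicit Arguments. Unset Strict Implicit.

(* An operator [T] into [S] is an A-projection iff it satisfies the normal
   equations [<A (y - T y), s> = 0] for [s] in [S]: one direction is the first
   variation of the quadratic form [<A z, z>], the other is Pythagoras.
   Under the normal equations [A (s - T s) = 0] for [s] in [S], so [s - T s] lies in
   [N = S ∩ N(A)]; hence [P_{S⊖N} T] fixes [S ⊖ N], vanishes on [N], and vanishes
   exactly on [A(S)^⊥], and [Q = P_{S⊖N} T + P_N] is a bounded idempotent onto [S]
   with [A Q = Q^* A].  Conversely, if [P_{S⊖N} T] is the projection along [A(S)^⊥],
   then [y - P_{S⊖N} T y] is orthogonal to [A(S)] and differs from [y - T y] by an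
   element of [N], which gives the normal equations.  The projections [P_N] and
   the adjoint [Q^*] exist by completeness (best approximation, Riesz). *)


Lemma complex_ge0E (R : realType) (z : R[i]) :
  0 <= z -> z = (complex.Re z)%:C%C /\ 0 <= complex.Re z.
Proof. by case: z => a b; rewrite lecE /= => /andP[/eqP -> ->]. Qed.

Lemma complex_eq0 (R : realType) (a b : R) : a ^+ 2 + b ^+ 2 <= 0 -> (a +i* b)%C = 0.
Proof. by move=> h; apply/eqP; rewrite eq_complex /=; apply/andP; split; apply/eqP; nra. Qed.

Section Linear.
Variables (R : realType) (V : lmodType R[i]) (f : V -> V).
Hypothesis flin : forall (a : R[i]) x y, f (a *: x + y) = a *: f x + f y.

Lemma linD x y : f (x + y) = f x + f y.
Proof. by have := flin 1 x y; rewrite !scale1r. Qed.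
Lemma lin0 : f 0 = 0.
Proof. by apply: (addrI (f 0)); rewrite -linD !addr0. Qed.
Lemma linZ a x : f (a *: x) = a *: f x.
Proof. by rewrite -[a *: x]addr0 flin lin0 addr0. Qed.
Lemma linB x y : f (x - y) = f x - f y.
Proof. by rewrite linD -scaleN1r linZ scaleN1r. Qed.
End Linear.

Section InnerProduct.
Variables (R : realType) (V : lmodType R[i]) (ip : V -> V -> R[i]).
Hypothesis Hip : is_inner_product ip.

Lemma ipC x y : ip y x = (ip x y)^*. Proof. by case: Hip. Qed.
Lemma ipxx_ge0 x : 0 <= ip x x. Proof. by case: Hip. Qed.
Lemma ipxx_eq0 x : ip x x = 0 -> x = 0. Proof. by case: Hip => _ _ _; apply. Qed.

Lemma ipDl x y z : ip (x + y) z = ip x z + ip y z.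
Proof. by case: Hip => lin _ _ _; rewrite -[x]scale1r lin mul1r scale1r. Qed.
Lemma ip0l z : ip 0 z = 0.
Proof. by apply: (addrI (ip 0 z)); rewrite -ipDl !addr0. Qed.
Lemma ipZl a x z : ip (a *: x) z = a * ip x z.
Proof. by case: Hip => lin _ _ _; rewrite -[a *: x]addr0 lin ip0l addr0. Qed.
Lemma ipBl x y z : ip (x - y) z = ip x z - ip y z.
Proof. by rewrite ipDl -scaleN1r ipZl mulN1r. Qed.
Lemma ipDr x y z : ip z (x + y) = ip z x + ip z y.
Proof. by rewrite ipC ipDl rmorphD /= -!ipC. Qed.
Lemma ip0r z : ip z 0 = 0.
Proof. by rewrite ipC ip0l conjC0. Qed.
Lemma ipZr a x z : ip z (a *: x) = a^* * ip z x.
Proof. by rewrite ipC ipZl rmorphM /= -ipC. Qed.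
Lemma ipBr x y z : ip z (x - y) = ip z x - ip z y.
Proof. by rewrite ipC ipBl rmorphB /= -!ipC. Qed.

Lemma ip_injr u v : (forall x, ip x u = ip x v) -> u = v.
Proof.
move=> h; apply/eqP; rewrite -subr_eq0; apply/eqP; apply: ipxx_eq0.
by rewrite ipBr h subrr.
Qed.

End InnerProduct.

Section PositiveOperator.
Variables (R : realType) (V : lmodType R[i]) (ip : V -> V -> R[i]).
Hypothesis Hip : is_inner_product ip.
Variable B : V -> V.
Hypothesis Blin : forall (a : R[i]) x y, B (a *: x + y) = a *: B x + B y.
Hypothesis Bpos : forall x, 0 <= ip (B x) x.

(* Polarization: positivity of the form on [x + y] and [x + 'i y] pins down both
   components of [ip (B x) y - ip x (B y)]. *)
Lemma posop_selfadjoint x y : ip (B x) y = ip x (B y).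
Proof.
have := Bpos (x + y); have := Bpos (x + 'i%C *: y).
rewrite !(linD Blin) (linZ Blin) !(ipDl Hip) !(ipDr Hip) !(ipZr Hip) !(ipZl Hip).
have [-> _] := complex_ge0E (Bpos x); have [-> _] := complex_ge0E (Bpos y).
rewrite [ip x (B y)](ipC Hip).
case: (ip (B x) y) => p1 p2; case: (ip (B y) x) => r1 r2.
simpc => /andP[/eqP h1 _] /andP[/eqP h2 _].
by congr (_ +i* _)%C; lra.
Qed.

Lemma posop_form_expand u w t :
  ip (B (u + t *: w)) (u + t *: w) =
  ip (B u) u + t^* * ip (B u) w + t * (ip (B u) w)^* + t * t^* * ip (B w) w.
Proof.
rewrite (linD Blin) (linZ Blin) !(ipDl Hip) !(ipDr Hip) !(ipZl Hip) !(ipZr Hip).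
by rewrite [ip (B w) u]posop_selfadjoint [ip w (B u)](ipC Hip); ring.
Qed.

Lemma posop_formD_orth u v : ip (B u) v = 0 ->
  ip (B (u + v)) (u + v) = ip (B u) u + ip (B v) v.
Proof.
move=> uv0; rewrite (linD Blin) !(ipDl Hip) !(ipDr Hip) [ip (B v) u]posop_selfadjoint.
by rewrite [ip v (B u)](ipC Hip) uv0 conjC0 addr0 add0r.
Qed.

(* Moving from [u] along [w] by [t = - c / (b + 1)], with [c = ip (B u) w] and
   [b = ip (B w) w], lowers the form by [|c|^2 (b + 2) / (b + 1)^2]. *)
Lemma posop_min_orth u w :
  (forall t, complex.Re (ip (B u) u) <= complex.Re (ip (B (u + t *: w)) (u + t *: w))) ->
  ip (B u) w = 0.
Proof.
move=> umin; have [Eb b0] := complex_ge0E (Bpos w).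
move: (complex.Re _) Eb b0 => b Eb b0.
case Ec: (ip (B u) w) => [c1 c2]; apply: complex_eq0.
have b1 : 0 < b + 1 by lra.
have [k0 kb] : 0 < (b + 1)^-1 /\ (b + 1)^-1 * (b + 1) = 1.
  by rewrite invr_gt0 mulVf ?gt_eqF.
move: ((b + 1)^-1) k0 kb => k k0 kb.
have := umin (- (c1 * k) +i* - (c2 * k))%C.
rewrite posop_form_expand Ec Eb; case: (ip (B u) u) => x1 x2; simpc => /= h.
have descent : 0 <= k * (c1 ^+ 2 + c2 ^+ 2) * (k * b - 2) by nra.
have kb1 : k * b <= 1 by nra.
have : k * (c1 ^+ 2 + c2 ^+ 2) <= 0 by nra.
nra.
Qed.

Lemma posop_form_eq0 z : ip (B z) z = 0 -> B z = 0.
Proof.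
move=> z0; apply: (ipxx_eq0 Hip); apply: (@posop_min_orth z (B z)) => t.
by rewrite z0 /=; have [_ ->] := complex_ge0E (Bpos (z + t *: B z)).
Qed.

End PositiveOperator.

Section Norm.
Variables (R : realType) (V : lmodType R[i]) (ip : V -> V -> R[i]).
Hypothesis Hip : is_inner_product ip.

Definition sqnorm x : R := complex.Re (ip x x).
Local Notation q := sqnorm.
Local Notation hn := (hnorm ip).

Lemma ip_selfE x : ip x x = (q x)%:C%C.
Proof. by have [] := complex_ge0E (ipxx_ge0 Hip x). Qed.
Lemma sqnorm_ge0 x : 0 <= q x.
Proof. by have [] := complex_ge0E (ipxx_ge0 Hip x). Qed.
Lemma sqnorm_eq0 x : q x = 0 -> x = 0.
Proof. by move=> qx0; apply: (ipxx_eq0 Hip); rewrite ip_selfE qx0. Qed.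

Lemma sqnormD x y : q (x + y) = q x + q y + 2 * complex.Re (ip x y).
Proof.
rewrite /q !(ipDl Hip) !(ipDr Hip) (ipC Hip x y).
by case: (ip x y) => a b; case: (ip x x) => c d; case: (ip y y) => e f; simpc => /=; ring.
Qed.

Lemma sqnormZ a x : q (a *: x) = (complex.Re a ^+ 2 + complex.Im a ^+ 2) * q x.
Proof.
by rewrite /q (ipZl Hip) (ipZr Hip) ip_selfE; case: a => a1 a2; simpc => /=; ring.
Qed.

Lemma sqnormN x : q (- x) = q x.
Proof. by rewrite -scaleN1r sqnormZ /=; ring. Qed.

Lemma parallelogram x y : q (x + y) + q (x - y) = 2 * q x + 2 * q y.
Proof. by rewrite !sqnormD sqnormN -scaleN1r (ipZr Hip) rmorphN1 mulN1r /=; ring. Qed.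

Lemma cauchy_schwarz x y :
  complex.Re (ip x y) ^+ 2 + complex.Im (ip x y) ^+ 2 <= q x * q y.
Proof.
have [qy0|qy0] := eqVneq (q y) 0.
  by rewrite qy0 mulr0 (sqnorm_eq0 qy0) (ip0r Hip) /=; lra.
have qy_gt0 : 0 < q y by rewrite lt0r qy0 sqnorm_ge0.
(* expand [0 <= q (x + t y)] at [t = - ip x y / q y] *)
have := sqnorm_ge0 (x + (- (complex.Re (ip x y) / q y) +i* - (complex.Im (ip x y) / q y))%C *: y).
rewrite /q (@posop_form_expand _ _ _ Hip id (fun _ _ _ => erefl) (ipxx_ge0 Hip)).
rewrite !ip_selfE -/(q x) -/(q y); case: (ip x y) => c1 c2 /=; simpc => /= h.
have qx0 := sqnorm_ge0 x; move: (q x) (q y) h qx0 qy_gt0 => a b h qx0 qy_gt0.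
suff: (c1 ^+ 2 + c2 ^+ 2) / b <= a by rewrite ler_pdivrMr.
have b_neq0 : b != 0 by rewrite gt_eqF.
have -> : (c1 ^+ 2 + c2 ^+ 2) / b = c1 / b * c1 + c2 / b * c2 by field.
have E : (c1 / b * (c1 / b) + c2 / b * (c2 / b)) * b = c1 / b * c1 + c2 / b * c2.
  by field.
by rewrite E in h; lra.
Qed.

Lemma hnorm_ge0 x : 0 <= hn x. Proof. exact: sqrtr_ge0. Qed.
Lemma hnorm_sqr x : hn x ^+ 2 = q x. Proof. by rewrite sqr_sqrtr // sqnorm_ge0. Qed.

Lemma Re_ip_le x y : complex.Re (ip x y) <= hn x * hn y.
Proof.
have hxy_ge0 : 0 <= hn x * hn y by rewrite mulr_ge0 // hnorm_ge0.
suff : complex.Re (ip x y) ^+ 2 <= (hn x * hn y) ^+ 2 by nra.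
rewrite exprMn !hnorm_sqr; have := cauchy_schwarz x y.
have := sqr_ge0 (complex.Im (ip x y)); lra.
Qed.

Lemma hnormD x y : hn (x + y) <= hn x + hn y.
Proof.
have hxy_ge0 : 0 <= hn x + hn y by rewrite addr_ge0 // hnorm_ge0.
suff : hn (x + y) ^+ 2 <= (hn x + hn y) ^+ 2 by have := hnorm_ge0 (x + y); nra.
rewrite hnorm_sqr sqnormD; have := Re_ip_le x y; rewrite -!hnorm_sqr; lra.
Qed.

Lemma converges_sqnorm u l e : 0 < e -> converges ip u l ->
  exists N, forall n, (N <= n)%N -> q (u n - l) < e.
Proof.
move=> e0 /(_ (Num.sqrt e)) [|N HN]; first by rewrite sqrtr_gt0.
exists N => n /HN h; rewrite -hnorm_sqr -(sqr_sqrtr (ltW e0)).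
by have := hnorm_ge0 (u n - l); nra.
Qed.

End Norm.

Section BoundedOperator.
Variables (R : realType) (V : lmodType R[i]) (ip : V -> V -> R[i]).
Hypothesis Hip : is_inner_product ip.
Local Notation q := (sqnorm ip).
Local Notation hn := (hnorm ip).

Lemma bounded_op_lin f : bounded_op ip f ->
  forall (a : R[i]) x y, f (a *: x + y) = a *: f x + f y.
Proof. by case. Qed.

Lemma bounded_op_ge0 f : bounded_op ip f ->
  exists2 M, 0 <= M & forall x, hn (f x) <= M * hn x.
Proof.
case=> _ [M HM]; exists `|M| => // x.
by apply: le_trans (HM x) _; rewrite ler_wpM2r ?hnorm_ge0 ?ler_norm.
Qed.

Lemma bounded_op_sqnorm f M : 0 <= M -> (forall x, hn (f x) <= M * hn x) ->
  forall x, q (f x) <= M ^+ 2 * q x.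
Proof.
move=> M0 fM x; rewrite -!(hnorm_sqr Hip) -exprMn.
by have := fM x; have := hnorm_ge0 ip (f x); nra.
Qed.

Lemma bounded_op_comp f g : bounded_op ip f -> bounded_op ip g ->
  bounded_op ip (fun x => f (g x)).
Proof.
move=> bf bg; split=> [a x y|]; first by rewrite (bounded_op_lin bg) (bounded_op_lin bf).
have [M M0 fM] := bounded_op_ge0 bf; have [K K0 gK] := bounded_op_ge0 bg.
by exists (M * K) => x; apply: le_trans (fM _) _; rewrite -mulrA ler_wpM2l.
Qed.

Lemma bounded_op_add f g : bounded_op ip f -> bounded_op ip g ->
  bounded_op ip (fun x => f x + g x).
Proof.
move=> bf bg; split=> [a x y|].
  by rewrite (bounded_op_lin bg) (bounded_op_lin bf) scalerDr addrACA.
have [M M0 fM] := bounded_op_ge0 bf; have [K K0 gK] := bounded_op_ge0 bg.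
by exists (M + K) => x; apply: le_trans (hnormD Hip _ _) _; rewrite mulrDl lerD.
Qed.

Lemma bounded_op_ker_closed f u l : bounded_op ip f ->
  (forall n, f (u n) = 0) -> converges ip u l -> f l = 0.
Proof.
move=> bf fu0 ul; have [M M0 fM] := bounded_op_ge0 bf.
apply: (sqnorm_eq0 Hip); apply/eqP; rewrite eq_le (sqnorm_ge0 Hip) andbT.
apply/ler_addgt0Pr => e e0; rewrite add0r.
have M1 : 0 < M ^+ 2 + 1 by have := sqr_ge0 M; lra.
have [N HN] := converges_sqnorm Hip (divr_gt0 e0 M1) ul.
have := bounded_op_sqnorm M0 fM (u N - l).
rewrite (linB (bounded_op_lin bf)) fu0 sub0r (sqnormN Hip).
have := HN N (leqnn N); have := sqnorm_ge0 Hip (u N - l).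
have := sqr_ge0 M; have : (M ^+ 2 + 1) * (e / (M ^+ 2 + 1)) = e by rewrite mulrC divfK ?gt_eqF.
move: (e / _) => k; nra.
Qed.

End BoundedOperator.

Lemma inv_succ_lt (R : realType) (e : R) : 0 < e ->
  exists N, forall k, (N <= k)%N -> k.+1%:R^-1 < e.
Proof.
move=> e0; exists (Num.truncn e^-1) => k Nk.
rewrite -[e]invrK ltf_pV2 ?posrE ?ltr0Sn ?invr_gt0 //.
by apply: lt_le_trans (truncnS_gt _) _; rewrite ler_nat ltnS.
Qed.

Section ClosedSubspace.
Variables (R : realType) (V : lmodType R[i]) (ip : V -> V -> R[i]).
Variable C : V -> Prop.
Hypothesis HC : closed_subspace ip C.

Lemma csub0 : C 0. Proof. by case: HC. Qed.
Lemma csubP a x y : C x -> C y -> C (a *: x + y). Proof. by case: HC => _ + _; apply. Qed.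
Lemma csub_lim u l : (forall n, C (u n)) -> converges ip u l -> C l.
Proof. by case: HC => _ _; apply. Qed.
Lemma csubD x y : C x -> C y -> C (x + y).
Proof. by move=> Cx Cy; have := csubP 1 Cx Cy; rewrite scale1r. Qed.
Lemma csubZ a x : C x -> C (a *: x).
Proof. by move=> Cx; have := csubP a Cx csub0; rewrite addr0. Qed.
Lemma csubB x y : C x -> C y -> C (x - y).
Proof. by move=> Cx Cy; rewrite -scaleN1r addrC; apply: csubP. Qed.

End ClosedSubspace.

Section BestApproximation.
Variables (R : realType) (V : lmodType R[i]) (ip : V -> V -> R[i]).
Hypothesis Hip : is_inner_product ip.
Hypothesis Hcomp : complete ip.
Variable C : V -> Prop.
Hypothesis HC : closed_subspace ip C.
Local Notation q := (sqnorm ip).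
Local Notation hn := (hnorm ip).

Lemma sqnorm_midpoint x a b :
  q (a - b) + 4 * q (x - 2^-1 *: (a + b)) = 2 * q (x - a) + 2 * q (x - b).
Proof.
have mid : (2 : R[i]) *: (x - 2^-1 *: (a + b)) = x - b + (x - a).
  rewrite scalerBr scalerA mulfV ?pnatr_eq0 // scale1r scaler_nat mulr2n.
  by rewrite opprD addrACA addrC.
have -> : a - b = x - b - (x - a) by rewrite opprB [RHS]addrC addrA subrK.
by rewrite [RHS]addrC -(parallelogram Hip) -mid (sqnormZ Hip) /=; ring.
Qed.

Lemma sqnormD_le a b : q (a + b) <= q a + (q a + 1 + hn b) * hn b.
Proof.
have := hnormD Hip a b; have := hnorm_ge0 ip (a + b); have := hnorm_ge0 ip a.
have := hnorm_ge0 ip b; have := sqr_ge0 (hn a - 1).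
rewrite -(hnorm_sqr Hip (a + b)) -(hnorm_sqr Hip a).
move: (hn (a + b)) (hn a) (hn b) => u v w sq w0 v0 u0 tri.
have : u ^+ 2 <= (v + w) ^+ 2 by rewrite ler_pXn2r ?nnegrE ?addr_ge0.
have := mulr_ge0 sq w0; nra.
Qed.

Variable x : V.

Let dist_set : classical_sets.set R := fun r => exists2 c, C c & r = q (x - c).
Let d := reals.inf dist_set.

Let dist_set_inf : classical_sets.has_inf dist_set.
Proof.
split; first by exists (q (x - 0)), 0; first exact: csub0 HC.
by exists 0 => _ [c _ ->]; apply: sqnorm_ge0.
Qed.

Let inf_le c : C c -> d <= q (x - c).
Proof. by move=> Cc; apply: (reals.ge_inf dist_set_inf.2); exists c. Qed.

Let inf_ge0 : 0 <= d.
Proof. by apply: reals.lb_le_inf; [case: dist_set_inf | move=> _ [c _ ->]; apply: sqnorm_ge0]. Qed.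

Let minimizing_seq :
  exists n : nat -> V, forall k, C (n k) /\ q (x - n k) < d + k.+1%:R^-1.
Proof.
have adherent k : exists c, C c /\ q (x - c) < d + k.+1%:R^-1.
  have eps_gt0 : 0 < k.+1%:R^-1 :> R by rewrite invr_gt0 ltr0Sn.
  have [_ [c Cc ->] close] := reals.inf_adherent eps_gt0 dist_set_inf.
  by exists c.
by have [n nmin] := boolp.choice adherent; exists n.
Qed.

Let minimizing_cauchy n : (forall k, C (n k) /\ q (x - n k) < d + k.+1%:R^-1) ->
  cauchy_seq ip n.
Proof.
move=> nmin e e0; have [N HN] := inv_succ_lt (divr_gt0 (exprn_gt0 2 e0) (ltr0n R 4)).
exists N => j k Nj Nk; rewrite -(ltr_pXn2r (n := 2)) ?nnegrE ?hnorm_ge0 ?ltW //.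
rewrite (hnorm_sqr Hip).
have Cmid : C (2^-1 *: (n j + n k)).
  by apply: (csubZ HC); apply: (csubD HC); [case: (nmin j)|case: (nmin k)].
have := sqnorm_midpoint x (n j) (n k); have := inf_le Cmid.
case: (nmin j) => _; case: (nmin k) => _; have := HN j Nj; have := HN k Nk.
move: (j.+1%:R^-1) (k.+1%:R^-1) => ej ek; lra.
Qed.

Let limit_attains_inf n l : (forall k, C (n k) /\ q (x - n k) < d + k.+1%:R^-1) ->
  converges ip n l -> q (x - l) <= d.
Proof.
move=> nmin nl; apply/ler_addgt0Pr => e e0.
have d3 : 0 < d + 3 by have := inf_ge0; lra.
pose r := Order.min 1 (e / (2 * (d + 3))).
have r0 : 0 < r by rewrite lt_min ltr01 divr_gt0 ?mulr_gt0.
have r1 : r <= 1 by rewrite ge_min lexx.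
have rd : r * (d + 3) <= e / 2.
  apply: (@le_trans _ _ (e / (2 * (d + 3)) * (d + 3))).
    by apply: ler_wpM2r; [exact: ltW | rewrite ge_min lexx orbT].
  by rewrite [X in X <= _](_ : _ = e / 2) //; field; rewrite gt_eqF.
have [N1 HN1] := nl r r0.
have [N2 HN2] := inv_succ_lt (divr_gt0 e0 (ltr0n R 2)).
pose k := maxn N1 N2.
have := sqnormD_le (x - n k) (n k - l); rewrite addrA subrK.
have := HN1 k (leq_maxl _ _); have := HN2 k (leq_maxr _ _); case: (nmin k) => _.
have : k.+1%:R^-1 <= 1 :> R by rewrite invf_le1 ?ltr0Sn // ler1n.
have := hnorm_ge0 ip (n k - l); have := sqnorm_ge0 Hip (x - n k).
move: (hn _) (q (x - n k)) (k.+1%:R^-1) => h a ek h0 a0 ek1 ak ek2 hr ql.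
have : (a + 1 + h) * h <= (d + 3) * r by apply: ler_pM; lra.
lra.
Qed.

Lemma best_approximation : exists2 p, C p & forall c, C c -> ip (x - p) c = 0.
Proof.
have [n nmin] := minimizing_seq.
have [l nl] := Hcomp (minimizing_cauchy nmin).
have Cl : C l by apply: (csub_lim HC _ nl) => k; case: (nmin k).
exists l => // c Cc.
apply: (@posop_min_orth _ _ _ Hip id (fun _ _ _ => erefl) (ipxx_ge0 Hip)) => t /=.
apply: le_trans (limit_attains_inf nmin nl) _.
rewrite -/(q _) (_ : x - l + t *: c = x - (- t *: c + l)).
  by apply: inf_le; apply: (csubP HC).
by rewrite scaleNr opprD opprK [RHS]addrA [RHS]addrAC.
Qed.

End BestApproximation.

Section OrthogonalProjection.
Variables (R : realType) (V : lmodType R[i]) (ip : V -> V -> R[i]).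
Hypothesis Hip : is_inner_product ip.
Hypothesis Hcomp : complete ip.
Variable C : V -> Prop.
Hypothesis HC : closed_subspace ip C.
Local Notation q := (sqnorm ip).

Definition cproj (x : V) : V := s2val (boolp.cid2 (best_approximation Hip Hcomp HC x)).

Lemma cproj_in x : C (cproj x).
Proof. by rewrite /cproj; case: (boolp.cid2 _). Qed.
Lemma cproj_orth x c : C c -> ip (x - cproj x) c = 0.
Proof. by rewrite /cproj; case: (boolp.cid2 _) => p Cp po; apply: po. Qed.

Lemma cproj_uniq x p : C p -> (forall c, C c -> ip (x - p) c = 0) -> cproj x = p.
Proof.
move=> Cp p_orth; apply/eqP; rewrite -subr_eq0; apply/eqP; apply: (ipxx_eq0 Hip).
have Cd : C (cproj x - p) by apply: (csubB HC) => //; apply: cproj_in.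
have E : cproj x - p = (x - p) - (x - cproj x) by rewrite opprB [RHS]addrC addrA subrK.
by rewrite {1}E (ipBl Hip) p_orth // cproj_orth // subrr.
Qed.

Lemma cproj_lin (a : R[i]) x y : cproj (a *: x + y) = a *: cproj x + cproj y.
Proof.
apply: cproj_uniq => [|c Cc]; first by apply: (csubP HC); apply: cproj_in.
have := cproj_orth x Cc; have := cproj_orth y Cc.
rewrite !(ipBl Hip) !(ipDl Hip) !(ipZl Hip) => /eqP + /eqP; rewrite !subr_eq0 => /eqP -> /eqP ->.
by rewrite subrr.
Qed.

Lemma cproj_bounded : bounded_op ip cproj.
Proof.
split; first exact: cproj_lin.
exists 1 => x; rewrite mul1r /hnorm ler_sqrt ?(sqnorm_ge0 Hip) // -/(q _) -/(q x).
rewrite -{2}(subrK (cproj x) x) [_ + _]addrC (sqnormD Hip) (ipC Hip) cproj_orth.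
  by rewrite conjC0 /=; have := sqnorm_ge0 Hip (x - cproj x); lra.
exact: cproj_in.
Qed.

End OrthogonalProjection.

Section RieszRepresentation.
Variables (R : realType) (V : lmodType R[i]) (ip : V -> V -> R[i]).
Hypothesis Hip : is_inner_product ip.
Hypothesis Hcomp : complete ip.
Local Notation q := (sqnorm ip).

Variables (f : V -> R[i]) (M : R).
Hypothesis flin : forall (a : R[i]) x y, f (a *: x + y) = a * f x + f y.
Hypothesis fM : forall x, complex.Re (f x) ^+ 2 + complex.Im (f x) ^+ 2 <= M * q x.

Let fD x y : f (x + y) = f x + f y.
Proof. by have := flin 1 x y; rewrite scale1r mul1r. Qed.
Let f0 : f 0 = 0.
Proof. by apply: (addrI (f 0)); rewrite -fD !addr0. Qed.
Let fZ a x : f (a *: x) = a * f x.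
Proof. by have := flin a x 0; rewrite !addr0 f0 addr0. Qed.
Let fB x y : f (x - y) = f x - f y.
Proof. by rewrite fD -scaleN1r fZ mulN1r. Qed.

Lemma functional_ker_closed : closed_subspace ip (fun x => f x = 0).
Proof.
split=> [|a x y fx0 fy0|u l fu0 ul]; first exact: f0.
  by rewrite flin fx0 fy0 mulr0 addr0.
case fl: (f l) => [a b]; apply: complex_eq0; apply/ler_addgt0Pr => e e0; rewrite add0r.
have M1 : 0 < `|M| + 1 by have := normr_ge0 M; lra.
have [N HN] := converges_sqnorm Hip (divr_gt0 e0 M1) ul.
have := fM (u N - l); rewrite fB fu0 fl sub0r /=.
have := HN N (leqnn N); have := sqnorm_ge0 Hip (u N - l); have := ler_norm M.
have := normr_ge0 M; have : (`|M| + 1) * (e / (`|M| + 1)) = e by rewrite mulrC divfK ?gt_eqF.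
rewrite !sqrrN; move: (q (u N - l)) (e / (`|M| + 1)) `|M| => c k m; nra.
Qed.

Lemma riesz_representation : exists r, forall x, f x = ip x r.
Proof.
have [f_eq0|/boolp.existsNP[x0 /eqP fx0]] := boolp.pselect (forall x, f x = 0).
  by exists 0 => x; rewrite f_eq0 (ip0r Hip).
pose z := x0 - cproj Hip Hcomp functional_ker_closed x0.
have fz : f z = f x0.
  by have /= fp0 := cproj_in Hip Hcomp functional_ker_closed x0; rewrite fB fp0 subr0.
have fz0 : f z != 0 by rewrite fz.
have zz0 : ip z z != 0 by apply: contra_neq fz0 => /(ipxx_eq0 Hip) ->; exact: f0.
exists ((f z / ip z z)^* *: z) => x.
have x_along_z : ip z x = (f x / f z)^* * ip z z.
  have Kw : f (x - (f x / f z) *: z) = 0 by rewrite fB fZ mulfVK // subrr.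
  have := cproj_orth Hip Hcomp functional_ker_closed x0 Kw.
  by rewrite -/z (ipBr Hip) (ipZr Hip) => /eqP; rewrite subr_eq0 => /eqP.
rewrite (ipZr Hip) conjCK [ip x z](ipC Hip) x_along_z rmorphM /= conjCK -(ipC Hip).
by field; apply/andP.
Qed.

End RieszRepresentation.

Lemma adjoint_exists (R : realType) (V : lmodType R[i]) (ip : V -> V -> R[i])
    (Hip : is_inner_product ip) (Hcomp : complete ip) (Q : V -> V) :
  bounded_op ip Q -> exists2 Qs, bounded_op ip Qs & is_adjoint ip Q Qs.
Proof.
move=> bQ; have Qlin := bounded_op_lin bQ; have [M M0 QM] := bounded_op_ge0 bQ.
have repr y : exists r, forall x, ip (Q x) y = ip x r.
  apply: (@riesz_representation _ _ _ Hip Hcomp _ (M ^+ 2 * sqnorm ip y)).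
    by move=> a x x'; rewrite Qlin (ipDl Hip) (ipZl Hip).
  move=> x; apply: le_trans (cauchy_schwarz Hip _ _) _.
  by rewrite mulrAC ler_wpM2r ?(sqnorm_ge0 Hip) ?(bounded_op_sqnorm Hip M0 QM).
have [Qs adj] := boolp.choice repr.
have Qslin a y y' : Qs (a *: y + y') = a *: Qs y + Qs y'.
  by apply: (ip_injr Hip) => x; rewrite -adj !(ipDr Hip) !(ipZr Hip) -!adj.
exists Qs => //; split=> //; exists M => y.
have h_ge0 := hnorm_ge0 ip; set a := hnorm ip (Qs y).
suff : a * (a - M * hnorm ip y) <= 0.
  have [->|a_neq0] := eqVneq a 0; first by rewrite mulr_ge0.
  by rewrite pmulr_rle0 ?subr_le0 // lt0r a_neq0 h_ge0.
have : a ^+ 2 <= hnorm ip (Q (Qs y)) * hnorm ip y.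
  by rewrite /a (hnorm_sqr Hip) /sqnorm -adj (Re_ip_le Hip).
have : hnorm ip (Q (Qs y)) * hnorm ip y <= M * a * hnorm ip y by rewrite ler_wpM2r.
by rewrite expr2; lra.
Qed.

Section OrthProjFacts.
Variables (R : realType) (V : lmodType R[i]) (ip : V -> V -> R[i]).
Hypothesis Hip : is_inner_product ip.
Variables (M : V -> Prop) (P : V -> V).
Hypothesis HP : orth_proj ip M P.

Lemma orth_proj_bounded : bounded_op ip P. Proof. by case: HP. Qed.
Lemma orth_proj_in x : M (P x). Proof. by case: HP. Qed.

Lemma orth_proj_eq0 y : (forall m, M m -> ip y m = 0) -> P y = 0.
Proof.
move=> y_orth; apply: (ipxx_eq0 Hip).
have : ip (y - P y) (P y) = 0 by case: HP => _ _; apply; apply: orth_proj_in.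
by rewrite (ipBl Hip) (y_orth _ (orth_proj_in _)) sub0r => /eqP; rewrite oppr_eq0 => /eqP.
Qed.

Lemma orth_proj_id m : (forall x y, M x -> M y -> M (x - y)) -> M m -> P m = m.
Proof.
move=> MB Mm; apply/eqP; rewrite eq_sym -subr_eq0; apply/eqP; apply: (ipxx_eq0 Hip).
by case: HP => _ _; apply; apply: MB => //; apply: orth_proj_in.
Qed.

End OrthProjFacts.

Section AProjection.
Variables (R : realType) (V : lmodType R[i]) (ip : V -> V -> R[i]).
Hypothesis Hip : is_inner_product ip.
Hypothesis Hcomp : complete ip.
Variable A : V -> V.
Hypothesis Ab : bounded_op ip A.
Hypothesis Apos : forall x, 0 <= ip (A x) x.
Variable S : V -> Prop.
Hypothesis HS : closed_subspace ip S.
Variable T : V -> V.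
Hypothesis HTS : forall x, S (T x).

Local Notation N := (inter S (op_null A)).
Local Notation M := (ominus ip S (inter S (op_null A))).
Let Alin := bounded_op_lin Ab.
Let Asym x y : ip (A x) y = ip x (A y) := posop_selfadjoint Hip Alin Apos x y.

Lemma A_projection_normalP :
  (forall y s, S s -> Anorm ip A (y - T y) <= Anorm ip A (y - s)) <->
  (forall y s, S s -> ip (A (y - T y)) s = 0).
Proof.
split=> [Tmin y s Ss | normal y s Ss].
  apply: (posop_min_orth Hip Alin Apos) => t.
  have := Tmin y (T y - t *: s) (csubB HS (HTS y) (csubZ HS t Ss)).
  have -> : y - (T y - t *: s) = y - T y + t *: s by rewrite opprB addrA addrAC.
  rewrite /Anorm ler_sqrt //.
  by have [_ ->] := complex_ge0E (Apos (y - T y + t *: s)).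
rewrite /Anorm ler_sqrt; last by have [_ ->] := complex_ge0E (Apos (y - s)).
have -> : y - s = (y - T y) + (T y - s) by rewrite addrA subrK.
have Sv : S (T y - s) := csubB HS (HTS y) Ss.
rewrite (posop_formD_orth Hip Alin Apos (normal y _ Sv)) raddfD /= lerDl.
by have [_ ->] := complex_ge0E (Apos (T y - s)).
Qed.

Hypothesis HT : bounded_op ip T.
Variable P : V -> V.
Hypothesis HP : orth_proj ip M P.
Let Plin := bounded_op_lin (orth_proj_bounded HP).

Lemma kerA_closed : closed_subspace ip N.
Proof.
split=> [|a x y [Sx Ax0] [Sy Ay0]|u l uN ul].
- by split; [exact: (csub0 HS) | exact: lin0 Alin].
- by split; [apply: (csubP HS) | rewrite /op_null Alin Ax0 Ay0 scaler0 addr0].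
- split; first by apply: (csub_lim HS _ ul) => n; case: (uN n).
  by apply: (bounded_op_ker_closed Hip Ab _ ul) => n; case: (uN n).
Qed.

Lemma ominusB x y : M x -> M y -> M (x - y).
Proof.
move=> [Sx x_orth] [Sy y_orth]; split=> [|n Nn]; first exact: (csubB HS).
by rewrite (ipBl Hip) x_orth // y_orth // subrr.
Qed.

Let PN := cproj Hip Hcomp kerA_closed.

Lemma P_kerA n : N n -> P n = 0.
Proof.
move=> Nn; apply: (orth_proj_eq0 Hip HP) => m [_ m_orth].
by rewrite (ipC Hip) m_orth ?conjC0.
Qed.

Lemma P_ominus m : M m -> P m = m.
Proof. exact: (orth_proj_id Hip HP ominusB). Qed.

Lemma A_PN x : A (PN x) = 0.
Proof. by case: (cproj_in Hip Hcomp kerA_closed x). Qed.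

Lemma sub_PN_ominus s : S s -> M (s - PN s).
Proof.
move=> Ss; split=> [|n Nn]; last exact: cproj_orth.
by apply: (csubB HS) => //; case: (cproj_in Hip Hcomp kerA_closed s).
Qed.

Lemma P_S s : S s -> P s = s - PN s.
Proof.
move=> Ss; rewrite -{1}(subrK (PN s) s) (linD Plin) (P_ominus (sub_PN_ominus Ss)).
by rewrite P_kerA ?addr0 //; apply: cproj_in.
Qed.

Section NormalEquations.
Hypothesis normal : forall y s, S s -> ip (A (y - T y)) s = 0.

Lemma normal_kerA s : S s -> N (s - T s).
Proof.
move=> Ss; have Sd : S (s - T s) := csubB HS Ss (HTS s).
by split=> //; apply: (posop_form_eq0 Hip Alin Apos); apply: normal.
Qed.

Lemma PT_ominus m : M m -> P (T m) = m.
Proof.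
move=> Mm; rewrite -{1}(subKr m (T m)) (linB Plin) P_ominus //.
by rewrite P_kerA ?subr0 //; apply: normal_kerA; case: Mm.
Qed.

Lemma PT_kerA n : N n -> P (T n) = 0.
Proof.
move=> Nn; apply: P_kerA; rewrite -(subKr n (T n)).
by apply: (csubB kerA_closed) => //; apply: normal_kerA; case: Nn.
Qed.

(* [x] is orthogonal to [A(S)] iff [A x] annihilates [S]; by the normal equations
   this says that [A (T x)] does, i.e. [T x] lies in [N(A)]. *)
Lemma PT_oblique : oblique_proj ip M (orth ip (op_image A S)) (fun x => P (T x)).
Proof.
split=> [|x|y|x]; first exact: (bounded_op_comp (orth_proj_bounded HP) HT).
- by rewrite PT_ominus //; exact: (orth_proj_in HP (T x)).
- split=> [My|[x ->]]; last exact: (orth_proj_in HP (T x)).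
  by exists y; rewrite PT_ominus.
- split=> [x_orth|PTx0 _ [s [Ss ->]]].
    apply: P_kerA; split=> //; apply: (posop_form_eq0 Hip Alin Apos).
    have := normal x (HTS x); rewrite (linB Alin) (ipBl Hip) Asym.
    by rewrite x_orth; [rewrite sub0r => /eqP; rewrite oppr_eq0 => /eqP | exists (T x)].
  have ATx0 : A (T x) = 0.
    have := P_S (HTS x); rewrite PTx0 => /eqP; rewrite eq_sym subr_eq0 => /eqP ->.
    exact: A_PN.
  by rewrite -Asym -[x](subrK (T x)) (linD Alin) ATx0 addr0 normal.
Qed.

Let Q x := P (T x) + PN x.

Let Q_S x : S (Q x).
Proof.
apply: (csubD HS); first by case: (orth_proj_in HP (T x)).
by case: (cproj_in Hip Hcomp kerA_closed x).
Qed.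

Let Q_id s : S s -> Q s = s.
Proof.
move=> Ss; rewrite /Q -{1}(subrK (PN s) s) (linD (bounded_op_lin HT)) (linD Plin).
rewrite (PT_ominus (sub_PN_ominus Ss)) PT_kerA ?addr0 ?subrK //.
exact: cproj_in.
Qed.

Let A_Q x s : S s -> ip (A (Q x)) s = ip (A x) s.
Proof.
move=> Ss; have := normal x Ss; rewrite (linB Alin) (ipBl Hip) => /eqP; rewrite subr_eq0 => /eqP ->.
by rewrite /Q (linD Alin) A_PN addr0 P_S // (linB Alin) A_PN subr0.
Qed.

Lemma normal_compatible : compatible ip A S.
Proof.
have bQ : bounded_op ip Q.
  apply: (bounded_op_add Hip); last exact: cproj_bounded.
  exact: (bounded_op_comp (orth_proj_bounded HP) HT).
have [Qs bQs adj] := adjoint_exists Hip Hcomp bQ.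
exists Q, Qs; split=> // [x|y|x]; first exact: Q_id.
  by split=> [Sy|[x ->]]; [exists y; rewrite Q_id | exact: Q_S].
apply: (ip_injr Hip) => z; rewrite -adj -Asym -(A_Q z (Q_S x)) Asym.
by rewrite [RHS](ipC Hip) -(A_Q x (Q_S z)) -(ipC Hip).
Qed.

End NormalEquations.

Lemma oblique_normal Q : oblique_proj ip M (orth ip (op_image A S)) Q ->
  (forall x, P (T x) = Q x) -> forall y s, S s -> ip (A (y - T y)) s = 0.
Proof.
move=> [bQ Qidem _ Qker] PTQ y s Ss.
have y_orth : orth ip (op_image A S) (y - Q y).
  by apply/Qker; rewrite /op_null (linB (bounded_op_lin bQ)) Qidem subrr.
have -> : A (y - T y) = A (y - Q y).
  by rewrite -PTQ (P_S (HTS y)) !(linB Alin) A_PN subr0.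
by rewrite Asym; apply: y_orth; exists s.
Qed.

End AProjection.

Unset Implicit Arguments. Set Strict Implicit.

Theorem mainTheorem7 (R : realType) (V : lmodType R[i]) (ip : V -> V -> R[i])
  (HH : hilbert_space ip) (Hsep : separable ip)
  (A : V -> V) (HA : positive_op ip A)
  (S : V -> Prop) (HS : closed_subspace ip S)
  (T : V -> V) (HT : bounded_op ip T) (HTS : forall x, S (T x))
  (P : V -> V)
  (HP : orth_proj ip (ominus ip S (inter S (op_null A))) P) :
  A_projection ip A S T <->
  (compatible ip A S /\
   exists Q : V -> V,
     oblique_proj ip (ominus ip S (inter S (op_null A)))
                     (orth ip (op_image A S)) Q /\
     forall x, P (T x) = Q x).
Proof.
case: HH => Hip Hcomp; case: HA => Ab Apos.
have normalP := A_projection_normalP Hip Ab Apos HS HTS.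
split=> [[_ /normalP normal] | [_ [Q [oblQ PTQ]]]].
- split; first exact: (normal_compatible Hip Hcomp Ab Apos HS HTS HT HP normal).
  exists (fun x => P (T x)); split=> //.
  exact: (PT_oblique Hip Hcomp Ab Apos HS HTS HT HP normal).
- split=> //; apply/normalP.
  exact: (oblique_normal Hip Hcomp Ab Apos HS HTS HP oblQ PTQ).
Qed.
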